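(* Let $\delta\in[1/3,1]$, $\alpha>0$ with $\alpha\delta<1$, and $\eta_0^{2}=\frac{1+\alpha^{2}}{1+\delta^{2}}$. Let $0\le B_0\le\sqrt{1-\eta_0^2\delta^2}$ and define $\widetilde{A_\ast}=\sqrt{1-(1+\delta^2)B_0^2}$ and $\Delta'=\varepsilon^{4}B_0^{4}(1+\delta^{2})^{4}-2\widetilde{A_\ast}^{2}$. If $\alpha\ge\frac{10}{3}\varepsilon^{2}$ and $\varepsilon>0$ is small enough, then $-\Delta'\ge\widetilde{A_\ast}^{2}$.
   Context: Note $1-\eta_0^2\delta^2=\frac{1-\alpha^2\delta^2}{1+\delta^2}$, so $\widetilde{A_\ast}\ge\alpha\delta$ on the given range of $B_0$. *)

From mathcomp Require Import all_boot all_order all_algebra.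
Set Implicit Arguments. Unset Strict Implicit. Unset Printing Implicit Defensive.

(* Put x := alpha delta and s := (1 + delta^2) B0^2, so that At^2 = 1 - s and
   Delta' = (c s)^2 - 2 At^2 with c := eps^2 (1 + delta^2).  The bound on B0
   says exactly s <= 1 - x^2, and alpha >= 10/3 eps^2 gives c <= x on
   delta in [1/3, 1] because 10/3 delta - 1 - delta^2 = (delta - 1/3)(3 - delta).
   Hence (c s)^2 <= x^2 <= 1 - s = At^2, which is the claim; no smallness of
   eps is needed. *)
From mathcomp Require Import all_boot all_order all_algebra.
From mathcomp Require Import ring lra.
Import Order.TTheory GRing.Theory Num.Theory.
Local Open Scope ring_scope.

Lemma mul1Dsqr_le_mul {R : realFieldType} {k d a : R} :
  0 <= k -> 3^-1 <= d -> d <= 3 -> 10 / 3 * k <= a -> k * (1 + d ^+ 2) <= a * d.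
Proof.
move=> k_ge0 d_ge d_le ka.
have d_gt0 : 0 < d by apply: lt_le_trans d_ge; rewrite invr_gt0.
have gap : 0 <= k * ((d - 3^-1) * (3 - d)) by apply/mulr_ge0/mulr_ge0; lra.
apply: le_trans (ler_wpM2r (ltW d_gt0) ka); rewrite -subr_ge0.
suff -> : 10 / 3 * k * d - k * (1 + d ^+ 2) = k * ((d - 3^-1) * (3 - d)) by [].
by field.
Qed.

Lemma sqr_le_of_le_sqrt {R : rcfType} {b y : R} :
  0 <= y -> 0 <= b -> b <= Num.sqrt y -> b ^+ 2 <= y.
Proof. by move=> y_ge0 b_ge0; rewrite -(ler_sqrt _ y_ge0) sqrtr_sqr ger0_norm. Qed.

Lemma sqr_mul_le_1B {R : realFieldType} {c x s : R} :
  0 <= c -> c <= x -> 0 <= s -> s <= 1 - x ^+ 2 -> (c * s) ^+ 2 <= 1 - s.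
Proof.
move=> c_ge0 cx s_ge0 sx.
have cs_ge0 : 0 <= c * s := mulr_ge0 c_ge0 s_ge0.
have cs_le_x : c * s <= x.
  by apply: le_trans cx; rewrite ler_piMr //; have := sqr_ge0 x; lra.
have : (c * s) ^+ 2 <= x ^+ 2.
  by rewrite ler_sqr ?nnegrE //; apply: le_trans cs_le_x.
lra.
Qed.

Theorem lemma2 (R : rcfType) :
  exists eps0 : R, 0 < eps0 /\
  forall (eps delta alpha eta0 B0 : R),
    0 < eps -> eps < eps0 ->
    3^-1 <= delta -> delta <= 1 ->
    0 < alpha -> alpha * delta < 1 ->
    eta0 ^+ 2 = (1 + alpha ^+ 2) / (1 + delta ^+ 2) ->
    0 <= B0 -> B0 <= Num.sqrt (1 - eta0 ^+ 2 * delta ^+ 2) ->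
    alpha >= (10 / 3) * eps ^+ 2 ->
    let At := Num.sqrt (1 - (1 + delta ^+ 2) * B0 ^+ 2) in
    let Delta' := eps ^+ 4 * B0 ^+ 4 * (1 + delta ^+ 2) ^+ 4 - 2 * At ^+ 2 in
    - Delta' >= At ^+ 2.
Proof.
exists 1; split=> // eps delta alpha eta0 B0 _ _ d_ge d_le a_gt0 ad_lt1 eta0E
  B0_ge0 B0_le a_ge /=.
have q_gt0 : 0 < 1 + delta ^+ 2 by rewrite ltr_pwDl // sqr_ge0.
have ad_ge0 : 0 <= alpha * delta by apply: mulr_ge0; lra.
have etaE : 1 - eta0 ^+ 2 * delta ^+ 2 = (1 - (alpha * delta) ^+ 2) / (1 + delta ^+ 2).
  by rewrite eta0E; field; rewrite gt_eqF.
have s_le : (1 + delta ^+ 2) * B0 ^+ 2 <= 1 - (alpha * delta) ^+ 2.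
  rewrite mulrC -ler_pdivlMr // -etaE; apply: sqr_le_of_le_sqrt => //.
  by rewrite etaE divr_ge0 ?(ltW q_gt0) // subr_ge0 expr2; nra.
have s_ge0 : 0 <= (1 + delta ^+ 2) * B0 ^+ 2 by rewrite mulr_ge0 ?sqr_ge0 ?ltW.
set s := (1 + delta ^+ 2) * B0 ^+ 2 in s_le s_ge0 *.
have c_le : eps ^+ 2 * (1 + delta ^+ 2) <= alpha * delta.
  by apply: mul1Dsqr_le_mul; rewrite ?sqr_ge0 //; lra.
have := sqr_mul_le_1B (mulr_ge0 (sqr_ge0 eps) (ltW q_gt0)) c_le s_ge0 s_le.
rewrite sqr_sqrtr; last by have := sqr_ge0 (alpha * delta); lra.
suff -> : eps ^+ 4 * B0 ^+ 4 * (1 + delta ^+ 2) ^+ 4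
  = (eps ^+ 2 * (1 + delta ^+ 2) * s) ^+ 2 by lra.
by rewrite /s; ring.
Qed.
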